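(* Let $N\ge 3$, $\Omega=\{x\in\mathbb{R}^N : 1<|x|<3\}$, $\Psi_\alpha(x)=\big||x|-2\big|^\alpha$ for $\alpha>0$, and for $p>2$, $u\in H^1_0(\Omega)\setminus\{0\}$, $$R_{\alpha,p}(u)=\frac{\int_\Omega|\nabla u|^2\,dx}{\left(\int_\Omega \Psi_\alpha |u|^p\,dx\right)^{2/p}},\qquad S_{\alpha,p}=\inf_{u\in H^1_{0}(\Omega)\setminus\{0\}} R_{\alpha,p}(u).$$ Let $p\in(2,2^* )$, where $2^*=2N/(N-2)$. Then there exist $\bar\alpha>0$ and a constant $C>0$ (independent of $\alpha$) such that for all $\alpha\ge\bar\alpha$ $$S_{\alpha,p}\le C\,\alpha^{2-N+\frac{2N}{p}}.$$ *)

From HB Require Import structures.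
From mathcomp Require Import all_boot all_order all_algebra.
From mathcomp Require Import all_classical all_reals all_analysis.
Set Implicit Arguments. Unset Strict Implicit. Unset Printing Implicit Defensive.
Import Order.TTheory GRing.Theory Num.Theory.
Import numFieldNormedType.Exports.
Local Open Scope classical_set_scope.
Local Open Scope ring_scope.

Section Defs.
Context {R : realType}.

(* Euclidean squared norm and Euclidean norm on R^N = 'rV[R]_N
   (mathcomp's own norm on matrices is the max norm, so we define it). *)
Definition sqnorm {N : nat} (x : 'rV[R]_N) : R := \sum_(i < N) x 0 i ^+ 2.
Definition enorm {N : nat} (x : 'rV[R]_N) : R := Num.sqrt (sqnorm x).

Definition annulus (N : nat) : set 'rV[R]_N := [set x | 1 < enorm x < 3].

Definition Psi {N : nat} (alpha : R) (x : 'rV[R]_N) : R := `| enorm x - 2 | `^ alpha.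

(* Lebesgue integral over R^n of a nonnegative extended-real function,
   computed as an iterated one-dimensional Lebesgue integral
   (equal to the integral w.r.t. n-dimensional Lebesgue measure for
   nonnegative Borel functions, by Tonelli). *)
Fixpoint iint (n : nat) : ('rV[R]_n -> \bar R) -> \bar R :=
  match n return ('rV[R]_n -> \bar R) -> \bar R with
  | 0 => fun f => f 0
  | n'.+1 => fun f =>
      (\int[@lebesgue_measure R]_(t in [set: R])
          iint (fun y : 'rV[R]_n' => f (row_mx (const_mx t : 'rV[R]_1) y)))%E
  end.

Definition grad {N : nat} (f : 'rV[R]_N -> R) (x : 'rV[R]_N) : 'rV[R]_N :=
  \row_(i < N) derive f x (delta_mx 0 i : 'rV[R]_N).

Fixpoint iterD {N : nat} (ds : seq 'rV[R]_N) (f : 'rV[R]_N -> R) : 'rV[R]_N -> R :=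
  match ds with
  | [::] => f
  | d :: ds' => fun x => derive (iterD ds' f) x d
  end.

Definition smooth {N : nat} (f : 'rV[R]_N -> R) : Prop :=
  forall (ds : seq 'rV[R]_N) (x : 'rV[R]_N), differentiable (iterD ds f) x.

Definition test_fun {N : nat} (Om : set 'rV[R]_N) (f : 'rV[R]_N -> R) : Prop :=
  smooth f /\ compact (closure [set x | f x != 0]) /\
  closure [set x | f x != 0] `<=` Om.

(* Borel measurability of functions on R^N (via the product sigma-algebra
   on N-tuples of reals) *)
Definition rV_of_tuple {N : nat} (t : N.-tuple R) : 'rV[R]_N := \row_(i < N) tnth t i.
Definition borel_fun {N : nat} (u : 'rV[R]_N -> R) : Prop :=
  measurable_fun [set: N.-tuple R] (u \o rV_of_tuple).

(* (u, G) is an element of H^1_0(Om) with weak gradient G: u and G are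
   limits in L^2 of phi_n and grad phi_n for a sequence of test functions
   (H^1_0 = closure of C_c^infinity(Om) in H^1). *)
Definition H10 {N : nat} (Om : set 'rV[R]_N) (u : 'rV[R]_N -> R)
    (G : 'rV[R]_N -> 'rV[R]_N) : Prop :=
  borel_fun u /\ (forall i : 'I_N, borel_fun (fun x => G x 0 i)) /\
  exists phi : nat -> 'rV[R]_N -> R,
    (forall n, test_fun Om (phi n)) /\
    ((fun n => iint (fun x => ((phi n x - u x) ^+ 2)%:E)) @ \oo --> 0%E) /\
    ((fun n => iint (fun x => (sqnorm (grad (phi n) x - G x))%:E)) @ \oo --> 0%E).

Definition Rayleigh {N : nat} (alpha p : R) (u : 'rV[R]_N -> R)
    (G : 'rV[R]_N -> 'rV[R]_N) : \bar R :=
  (iint (fun x => (sqnorm (G x))%:E) /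
   (iint (fun x => (Psi alpha x * `|u x| `^ p)%:E)) `^ (2 / p))%E.

Definition S_ap (N : nat) (alpha p : R) : \bar R :=
  ereal_inf [set r | exists (u : 'rV[R]_N -> R) (G : 'rV[R]_N -> 'rV[R]_N),
     [/\ H10 (@annulus N) u G,
         iint (fun x => (u x ^+ 2 + sqnorm (G x))%:E) != 0%E &
         r = Rayleigh alpha p u G]].

End Defs.

(* Test the Rayleigh quotient on one bump. Put c = (1 + 2/a) e_1 and
   phi(x) = exp(-1 / (1 - a^2 |x - c|^2)), extended by 0 outside the ball
   B(c, 1/a). That ball lies in the shell 1 + 1/a <= |x| <= 1 + 3/a, so inside
   the annulus, where Psi_a <= 1 and, because (1 - 3/a)^a >= e^(-6), also
   Psi_a >= e^(-6). Since |grad phi| <= C a on B(c, 1/a) and phi >= e^(-4/3) on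
   the cube of side 1/(aN) around c, we get int |grad phi|^2 <= C a^2 a^(-N) and
   int Psi_a |phi|^p >= c a^(-N), whence R(phi) <= C a^(2 - N + 2N/p). Every
   integral is compared with a multiple of the indicator of a cube, whose
   iterated integral is computed exactly. *)

From HB Require Import structures.
From mathcomp Require Import all_boot all_order all_algebra.
From mathcomp Require Import all_classical all_reals all_analysis.
From mathcomp Require Import ring lra.
Import Order.TTheory GRing.Theory Num.Theory.
Import numFieldNormedType.Exports.
Local Open Scope classical_set_scope.
Local Open Scope ring_scope.

Section ExpInv.
Context {R : realType}.
Implicit Types (k : nat) (s : R).

(* The derivatives of s |-> exp(-1/s) (extended by 0) are combinations of
   the functions expinv k, see is_derive_expinv. *)
Definition expinv (k : nat) (s : R) : R :=
  if 0 < s then expR (- s^-1) * s^-1 ^+ k else 0.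

Lemma expinv_gt0 k s : 0 < s -> expinv k s = expR (- s^-1) * s^-1 ^+ k.
Proof. by rewrite /expinv => ->. Qed.

Lemma expinv_le0 k s : s <= 0 -> expinv k s = 0.
Proof. by rewrite /expinv ltNge => ->. Qed.

Lemma expinv_ge0 k s : 0 <= expinv k s.
Proof.
rewrite /expinv; case: ifPn => // s0.
by rewrite mulr_ge0 ?expR_ge0 // exprn_ge0 // invr_ge0 ltW.
Qed.

Lemma expinv0_le1 s : expinv 0 s <= 1.
Proof.
rewrite /expinv; case: ifPn => // s0; rewrite expr0 mulr1 expR_le1 oppr_le0.
by rewrite invr_ge0 ltW.
Qed.

(* From t ^+ (k+2) / (k+2)! <= expR t at t = 1/s. *)
Lemma expinv_le_sqr k s : expinv k s <= (k.+2)`!%:R * s ^+ 2.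
Proof.
rewrite /expinv; case: ifPn => s0; last by rewrite mulr_ge0 ?sqr_ge0.
set t := s^-1.
have t0 : 0 < t by rewrite invr_gt0.
have tX_le : t ^+ k.+2 <= (k.+2)`!%:R * expR t.
  rewrite -ler_pdivrMl ?ltr0n ?fact_gt0 // mulrC.
  by apply: le_trans (expR_ge1Dxn k.+1 (ltW t0)); rewrite lerDr.
have -> : s = t^-1 by rewrite invrK.
have et : 0 < expR t by rewrite expR_gt0.
have -> : expR (- t) * t ^+ k = (t ^+ k.+2 / expR t) * (t^-1) ^+ 2.
  by rewrite expRN !exprSr; field; rewrite gt_eqF //= gt_eqF.
by rewrite ler_wpM2r ?sqr_ge0 // ler_pdivrMr.
Qed.

Lemma is_derive_expinv_gt0 k s : 0 < s ->
  is_derive s (1 : R) (expinv k) (expinv k.+2 s - k%:R * expinv k.+1 s).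
Proof.
move=> s0; have sn0 : s != 0 by rewrite gt_eqF.
have dinv := @is_deriveV R id s 1 1 sn0 (is_derive_id _ _).
have dNinv : is_derive s (1 : R) (fun y : R => - y^-1) (s ^- 2).
  move/is_deriveN: dinv; rewrite opprfctE => h; apply: (is_derive_eq h).
  by rewrite scaler1 opprK.
have dexp : is_derive s (1 : R) (expR \o (fun y : R => - y^-1)) (expR (- s^-1) * s ^- 2).
  exact: (@is_derive1_comp R expR _ s _ _ (is_derive_expR _) dNinv).
have dpow := @is_deriveX R R^o (fun y : R => y^-1) k s 1 _ dinv.
have dprod := is_deriveM dexp dpow; rewrite exprfctE in dprod.
apply: (near_eq_is_derive (f := (expR \o (fun y : R => - y^-1)) * (fun y : R => y^-1 ^+ k))).
  near=> y; rewrite /expinv ifT; last by near: y; exact: lt_nbhsr.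
  by rewrite mulrfctE.
apply: (is_derive_eq dprod); rewrite /expinv !ifT //= /GRing.scale /=.
case: k {dpow dprod} => [|k].
  by rewrite !mul0r mulr0 add0r subr0 expr0 mul1r exprVn.
rewrite -[k.+1.-1]/k !exprSr exprVn; field.
Unshelve. all: try by end_near.
by rewrite sn0 expf_neq0.
Qed.

Lemma is_derive_expinv_lt0 k s : s < 0 ->
  is_derive s (1 : R) (expinv k) (expinv k.+2 s - k%:R * expinv k.+1 s).
Proof.
move=> s0; rewrite !expinv_le0 ?ltW // mulr0 subr0.
apply: (near_eq_is_derive (f := cst (0 : R))).
near=> y; rewrite /= expinv_le0 // ltW //; near: y; exact: lt_nbhsl.
Unshelve. all: by end_near.
Qed.

(* The difference quotient at 0 is bounded by (k+2)! h, by expinv_le_sqr. *)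
Lemma is_derive_expinv0 k : is_derive (0 : R) (1 : R) (expinv k) 0.
Proof.
have quot0 : (fun h : R => h^-1 *: (expinv k (h *: 1 + 0) - expinv k 0)) @ 0^' --> (0 : R).
  apply/cvgr0Pnorm_le => eps eps0.
  have c0 : 0 < (k.+2)`!%:R :> R by rewrite ltr0n fact_gt0.
  near=> h.
  have hn0 : h != 0 by near: h; exact: nbhs_dnbhs_neq.
  rewrite (@expinv_le0 k 0 (lexx 0)) subr0 scaler1 addr0 /GRing.scale /=.
  rewrite normrM (ger0_norm (expinv_ge0 k h)) normfV ler_pdivrMl ?normr_gt0 //.
  apply: (le_trans (expinv_le_sqr k h)).
  rewrite -(real_normK (num_real h)) expr2 mulrA [X in X <= _]mulrC ler_wpM2l //.
  rewrite mulrC -ler_pdivlMr //; apply: ltW; near: h; apply: dnbhs0_lt.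
  by rewrite divr_gt0.
apply: DeriveDef; first by apply/cvg_ex; exists 0.
exact: cvg_lim quot0.
Unshelve. all: by end_near.
Qed.

Lemma is_derive_expinv k s :
  is_derive s (1 : R) (expinv k) (expinv k.+2 s - k%:R * expinv k.+1 s).
Proof.
have [s0|s0|->] := ltgtP s 0.
- exact: is_derive_expinv_lt0.
- exact: is_derive_expinv_gt0.
- by rewrite !expinv_le0 // mulr0 subr0; exact: is_derive_expinv0.
Qed.

Lemma derivable_expinv k s : derivable (expinv k) s 1.
Proof. by case: (is_derive_expinv k s). Qed.

Lemma derive1_expinv k s : derive1 (expinv k) s = expinv k.+2 s - k%:R * expinv k.+1 s.
Proof. by rewrite derive1E; case: (is_derive_expinv k s). Qed.

Lemma differentiable_expinv k s : differentiable (expinv k) s.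
Proof. exact/derivable1_diffP/derivable_expinv. Qed.

Lemma continuous_expinv k : continuous (expinv k).
Proof. by move=> s; apply: differentiable_continuous; exact: differentiable_expinv. Qed.

End ExpInv.

Section Elementary.
Context {R : realType} {N : nat}.
Implicit Types (f g : 'rV[R]_N -> R) (x d : 'rV[R]_N).

(* A class of functions closed under directional derivatives, hence smooth. *)
Inductive elementary : ('rV[R]_N -> R) -> Prop :=
| elementary_cst (c : R) : elementary (fun _ => c)
| elementary_coord (i : 'I_N) : elementary (fun x => x 0 i)
| elementary_add f g : elementary f -> elementary g -> elementary (fun x => f x + g x)
| elementary_mul f g : elementary f -> elementary g -> elementary (fun x => f x * g x)
| elementary_expinv k f : elementary f -> elementary (fun x => expinv k (f x)).

Lemma elementary_differentiable {f} : elementary f -> forall x, differentiable f x.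
Proof.
elim=> {f} [c x|i x|f g _ df _ dg x|f g _ df _ dg x|k f _ df x].
- exact: differentiable_cst.
- exact: differentiable_coord.
- by have := differentiableD (df x) (dg x); rewrite addrfctE.
- by have := differentiableM (df x) (dg x); rewrite mulrfctE.
- by apply: (differentiable_comp (df x)); exact: differentiable_expinv.
Qed.

Lemma derive_coord (i : 'I_N) x d : 'D_d (fun y : 'rV[R]_N => y 0 i) x = d 0 i.
Proof.
have := @derive_mx R _ 1 N id x d (@derivable_id _ _ x d).
by rewrite derive_id => /matrixP /(_ 0 i); rewrite mxE.
Qed.

Lemma derive_addf f g x d : differentiable f x -> differentiable g x ->
  'D_d (fun y => f y + g y) x = 'D_d f x + 'D_d g x.
Proof. by move=> df dg; rewrite -deriveD //; apply: diff_derivable. Qed.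

Lemma derive_mulf f g x d : differentiable f x -> differentiable g x ->
  'D_d (fun y => f y * g y) x = f x * 'D_d g x + g x * 'D_d f x.
Proof. by move=> df dg; rewrite -[RHS]deriveM //; apply: diff_derivable. Qed.

Lemma derive_sumf n (F : 'I_n -> 'rV[R]_N -> R) x d :
  (forall i, differentiable (F i) x) ->
  'D_d (fun y => \sum_(i < n) F i y) x = \sum_(i < n) 'D_d (F i) x.
Proof.
move=> dF; have := @derive_sum R _ _ n F x d (fun i => @diff_derivable _ _ _ _ _ d (dF i)).
by rewrite fct_sumE.
Qed.

Lemma derive_compf (h : R -> R) f x d :
  differentiable f x -> derivable h (f x) 1 ->
  'D_d (fun y => h (f y)) x = derive1 h (f x) * 'D_d f x.
Proof.
move=> df dh; have dh' : differentiable h (f x) by exact/derivable1_diffP.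
have dhf : differentiable (h \o f) x by exact: differentiable_comp.
rewrite (deriveE d dhf) diff_comp // /= deriv1E // (deriveE d df) /=.
by rewrite mulrC.
Qed.

Lemma derive_expinvf k f x d : differentiable f x ->
  'D_d (fun y => expinv k (f y)) x =
  (expinv k.+2 (f x) - k%:R * expinv k.+1 (f x)) * 'D_d f x.
Proof.
by move=> df; rewrite derive_compf ?derive1_expinv //; exact: derivable_expinv.
Qed.

Lemma elementary_derive f d : elementary f -> elementary (fun x => 'D_d f x).
Proof.
elim=> {f} [c|i|f g ef IHf eg IHg|f g ef IHf eg IHg|k f ef IHf].
- have -> : (fun x => 'D_d (fun _ : 'rV[R]_N => c) x) = fun _ => 0.
    by apply: funext => x; exact: derive_cst.
  exact: elementary_cst.
- have -> : (fun x => 'D_d (fun y : 'rV[R]_N => y 0 i) x) = fun _ => d 0 i.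
    by apply: funext => x; exact: derive_coord.
  exact: elementary_cst.
- have -> : (fun x => 'D_d (fun y => f y + g y) x) = fun x => 'D_d f x + 'D_d g x.
    by apply: funext => x; rewrite derive_addf //; exact: elementary_differentiable.
  exact: elementary_add.
- have -> : (fun x => 'D_d (fun y => f y * g y) x) =
      fun x => f x * 'D_d g x + g x * 'D_d f x.
    by apply: funext => x; rewrite derive_mulf //; exact: elementary_differentiable.
  by apply: elementary_add; exact: elementary_mul.
- have -> : (fun x => 'D_d (fun y => expinv k (f y)) x) = fun x =>
      (expinv k.+2 (f x) + (- k%:R) * expinv k.+1 (f x)) * 'D_d f x.
    by apply: funext => x; rewrite derive_expinvf ?mulNr //; exact: elementary_differentiable.
  apply: elementary_mul => //; apply: elementary_add; first exact: elementary_expinv.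
  by apply: elementary_mul; [exact: elementary_cst | exact: elementary_expinv].
Qed.

Lemma elementary_smooth f : elementary f -> smooth f.
Proof.
move=> ef ds x; apply: elementary_differentiable.
by elim: ds => [|d ds IH] //=; exact: elementary_derive.
Qed.

Lemma elementary_sum n (F : 'I_n -> 'rV[R]_N -> R) :
  (forall i, elementary (F i)) -> elementary (fun x => \sum_(i < n) F i x).
Proof.
elim: n F => [|n IH] F eF.
  have -> : (fun x => \sum_(i < 0) F i x) = fun _ => 0.
    by apply: funext => x; rewrite big_ord0.
  exact: elementary_cst.
have -> : (fun x => \sum_(i < n.+1) F i x) =
    fun x => \sum_(i < n) F (widen_ord (leqnSn n) i) x + F ord_max x.
  by apply: funext => x; rewrite big_ord_recr.
by apply: elementary_add => //; exact: IH.
Qed.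

Lemma elementary_borel f : elementary f -> borel_fun f.
Proof.
rewrite /borel_fun; elim=> {f} [c|i|f g _ mf _ mg|f g _ mf _ mg|k f _ mf].
- exact: measurable_cst.
- have -> : (fun x : 'rV[R]_N => x 0 i) \o @rV_of_tuple R N = (@tnth N R ^~ i).
    by apply: funext => t; rewrite /rV_of_tuple /= mxE.
  exact: measurable_tnth.
- exact: measurable_realfun.measurable_funD.
- exact: measurable_realfun.measurable_funM.
- apply: measurableT_comp => //.
  exact: measurable_realfun.continuous_measurable_fun (continuous_expinv k).
Qed.

End Elementary.

Section IteratedIntegral.
Context {R : realType}.
Local Notation mu := (@lebesgue_measure R).

(* No measurability is needed: the integral of a nonnegative function is a
   supremum over the simple functions below it. *)
Lemma ge0_le_integralT (f g : R -> \bar R) :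
  (forall t, (0 <= f t)%E) -> (forall t, (f t <= g t)%E) ->
  (\int[mu]_(t in [set: R]) f t <= \int[mu]_(t in [set: R]) g t)%E.
Proof.
move=> f0 fg; have g0 t : (0 <= g t)%E by exact: le_trans (f0 t) (fg t).
rewrite !ge0_integralTE //; apply: ereal_sup_le => _ [h hf <-].
by exists h => //= x; exact: le_trans (hf x) (fg x).
Qed.

Lemma iint_ge0 n (f : 'rV[R]_n -> \bar R) : (forall x, (0 <= f x)%E) -> (0 <= iint f)%E.
Proof.
elim: n f => [|n IH] f f0 /=; first exact: f0.
by apply: integral_ge0 => t _; apply: IH => y; exact: f0.
Qed.

Lemma ge0_le_iint n (f g : 'rV[R]_n -> \bar R) : (forall x, (0 <= f x)%E) ->
  (forall x, (f x <= g x)%E) -> (iint f <= iint g)%E.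
Proof.
elim: n f g => [|n IH] f g f0 fg /=; first exact: fg.
apply: ge0_le_integralT => t; first by apply: iint_ge0 => y; exact: f0.
by apply: IH => y; [exact: f0 | exact: fg].
Qed.

Lemma iint0 n (f : 'rV[R]_n -> \bar R) : (forall x, f x = 0%E) -> iint f = 0%E.
Proof.
elim: n f => [|n IH] f f0 /=; first exact: f0.
by apply: integral0_eq => t _; apply: IH => y; exact: f0.
Qed.

Definition itv_indic (a b t : R) : R := \1_([set` `[a, b]%R]) t.

Lemma itv_indic_ge0 a b t : 0 <= itv_indic a b t.
Proof. by rewrite /itv_indic indicE; case: (_ \in _). Qed.

Lemma integral_itv_indic (k a b : R) : 0 <= k -> a <= b ->
  (\int[mu]_(t in [set: R]) (k * itv_indic a b t)%:E = (k * (b - a))%:E)%E.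
Proof.
move=> k0 ab.
rewrite /itv_indic (@integralZl_indic _ _ _ mu setT measurableT (fun _ => [set` `[a, b]%R]) k) //; last first.
  by move=> k0'; exfalso; move: k0; rewrite leNgt k0'.
rewrite integral_indic // setIT.
have := @lebesgue_measure_itv R `[a, b]; rewrite /= => ->.
case: ltP => ab'; first by rewrite -EFinD -EFinM.
have -> : b = a by apply/eqP; rewrite eq_le ab -lee_fin ab'.
by rewrite subrr mulr0 mule0.
Qed.

Definition cube_indic {n} (c : 'I_n -> R) (r : R) (x : 'rV[R]_n) : R :=
  \prod_(i < n) itv_indic (c i - r) (c i + r) (x 0 i).

Lemma cube_indic_ge0 n (c : 'I_n -> R) r (x : 'rV[R]_n) : 0 <= cube_indic c r x.
Proof. by apply: prodr_ge0 => i _; exact: itv_indic_ge0. Qed.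

Lemma cube_indic1 n (c : 'I_n -> R) r (x : 'rV[R]_n) :
  (forall i, `|x 0 i - c i| <= r) -> cube_indic c r x = 1.
Proof.
move=> xin; apply: big1 => i _.
by rewrite /itv_indic indicE mem_set //= in_itv /= -ler_distl.
Qed.

Lemma cube_indicP n (c : 'I_n -> R) r (x : 'rV[R]_n) :
  (forall i, `|x 0 i - c i| <= r) /\ cube_indic c r x = 1 \/ cube_indic c r x = 0.
Proof.
have [xin|xout] := pselect (forall i, `|x 0 i - c i| <= r).
  by left; split => //; exact: cube_indic1.
right; move/existsNP: xout => [i /negP xi].
rewrite /cube_indic (bigD1 i) //= /itv_indic indicE memNset ?mul0r //= in_itv /= -ler_distl.
exact/negP.
Qed.

Lemma iint_cube_indic {n} (c : 'I_n -> R) {k r : R} : 0 <= k -> 0 <= r ->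
  iint (fun x : 'rV[R]_n => (k * cube_indic c r x)%:E) = (k * (2 * r) ^+ n)%:E.
Proof.
elim: n k c => [|n IH] k c k0 r0 /=; first by rewrite /cube_indic !big_ord0.
have row_mx0 t (y : 'rV[R]_n) : (row_mx (const_mx t : 'rV[R]_1) y) 0 ord0 = t.
  have -> : (ord0 : 'I_(1 + n)) = lshift n (ord0 : 'I_1) by apply: val_inj.
  by rewrite row_mxEl mxE.
have row_mx_lift t (y : 'rV[R]_n) (i : 'I_n) :
    (row_mx (const_mx t : 'rV[R]_1) y) 0 (lift ord0 i) = y 0 i.
  have -> : (lift ord0 i : 'I_(1 + n)) = rshift 1 i by apply: val_inj.
  by rewrite row_mxEr.
under eq_integral => t _.
  rewrite (_ : (fun y : 'rV[R]_n => _) = fun y =>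
      ((k * itv_indic (c ord0 - r) (c ord0 + r) t) *
       cube_indic (fun i => c (lift ord0 i)) r y)%:E); last first.
    apply: funext => y; rewrite /cube_indic big_ord_recl row_mx0 mulrA.
    by congr (_ * _)%:E; apply: eq_bigr => i _; rewrite row_mx_lift.
  rewrite IH ?mulr_ge0 ?itv_indic_ge0 //.
  over.
under eq_integral => t _ do rewrite mulrAC.
rewrite integral_itv_indic ?mulr_ge0 ?exprn_ge0 ?mulr_ge0 //; last lra.
by rewrite exprS; congr (_%:E); ring.
Qed.

End IteratedIntegral.

Lemma sqnorm_ge0 {R : realType} {N : nat} (v : 'rV[R]_N) : 0 <= sqnorm v.
Proof. by apply: sumr_ge0 => i _; exact: sqr_ge0. Qed.

Lemma Rayleigh_le {R : realType} {N : nat} (alpha p A L : R)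
    (u : 'rV[R]_N -> R) (G : 'rV[R]_N -> 'rV[R]_N) :
  0 < p -> 0 < L ->
  (iint (fun x => (sqnorm (G x))%:E) <= A%:E)%E ->
  (L%:E <= iint (fun x => (Psi alpha x * `|u x| `^ p)%:E))%E ->
  iint (fun x => (Psi alpha x * `|u x| `^ p)%:E) \is a fin_num ->
  (Rayleigh alpha p u G <= (A / L `^ (2 / p))%:E)%E.
Proof.
move=> p0 L0 numA denL; rewrite /Rayleigh.
set den := iint _ in denL *; set num := iint _ in numA *.
move=> /fineK den_fin; rewrite -den_fin in denL *.
rewrite lee_fin in denL; have D0 : 0 < fine den := lt_le_trans L0 denL.
rewrite poweR_EFin inver gt_eqF ?powR_gt0 // EFinM.
apply: lee_pmul => //.
- by apply: iint_ge0 => x; rewrite lee_fin sqnorm_ge0.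
- by rewrite lee_fin invr_ge0 powR_ge0.
rewrite lee_fin lef_pV2 ?posrE ?powR_gt0 //.
by apply: ge0_ler_powR; rewrite ?nnegrE ?(ltW L0) ?(ltW D0) // divr_ge0 ?ltW.
Qed.

Section Bump.
Context {R : realType} {N : nat} (i0 : 'I_N) (a : R).
Implicit Types (x y d : 'rV[R]_N) (p : R).

Definition center (i : 'I_N) : R := (i == i0)%:R * (1 + 2 / a).

Definition sqdist x : R := \sum_(i < N) (x 0 i - center i) ^+ 2.

Definition bump_arg x : R := 1 - a ^+ 2 * sqdist x.

Definition bump x : R := expinv 0 (bump_arg x).

Lemma bump_argE : bump_arg = fun x => 1 + (- a ^+ 2) * sqdist x.
Proof. by apply: funext => x; rewrite /bump_arg mulNr. Qed.

Lemma elementary_dev i : elementary (fun x => x 0 i - center i).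
Proof. exact: elementary_add (elementary_coord i) (elementary_cst _). Qed.

Lemma elementary_sqr_dev i : elementary (fun x => (x 0 i - center i) ^+ 2).
Proof.
have -> : (fun x => (x 0 i - center i) ^+ 2) =
    fun x => (x 0 i - center i) * (x 0 i - center i).
  by apply: funext => x; rewrite expr2.
by apply: elementary_mul; exact: elementary_dev.
Qed.

Lemma elementary_sqdist : elementary sqdist.
Proof. exact: elementary_sum elementary_sqr_dev. Qed.

Lemma elementary_bump_arg : elementary bump_arg.
Proof.
rewrite bump_argE; apply: elementary_add; first exact: elementary_cst.
by apply: elementary_mul; [exact: elementary_cst | exact: elementary_sqdist].
Qed.

Lemma elementary_bump : elementary bump.
Proof. exact: elementary_expinv elementary_bump_arg. Qed.

Lemma derive_sqr_dev i x d : 'D_d (fun y => (y 0 i - center i) ^+ 2) x =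
  2 * (x 0 i - center i) * d 0 i.
Proof.
have ddev := elementary_differentiable (elementary_dev i) x.
have -> : (fun y => (y 0 i - center i) ^+ 2) =
    fun y => (y 0 i - center i) * (y 0 i - center i).
  by apply: funext => y; rewrite expr2.
rewrite derive_mulf // derive_addf ?derive_coord ?derive_cst //.
  by rewrite addr0; ring.
exact: differentiable_coord.
Qed.

Lemma derive_bump x d : 'D_d bump x =
  expinv 2 (bump_arg x) * (- a ^+ 2 * \sum_(i < N) 2 * (x 0 i - center i) * d 0 i).
Proof.
have dsq := elementary_differentiable elementary_sqdist x.
rewrite /bump derive_expinvf; last exact: (elementary_differentiable elementary_bump_arg x).
rewrite mul0r subr0; congr (_ * _).
rewrite bump_argE derive_addf ?derive_cst ?add0r; first last.
- by apply: differentiableM => //; exact: differentiable_cst.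
- exact: differentiable_cst.
rewrite derive_mulf ?derive_cst ?mulr0 ?addr0; last 2 first.
- exact: differentiable_cst.
- exact: dsq.
congr (_ * _); rewrite /sqdist derive_sumf; last first.
  by move=> i; exact: elementary_differentiable (elementary_sqr_dev i) x.
by apply: eq_bigr => i _; exact: derive_sqr_dev.
Qed.

Lemma grad_bump x i :
  grad bump x 0 i = expinv 2 (bump_arg x) * (- a ^+ 2 * (2 * (x 0 i - center i))).
Proof.
rewrite /grad mxE derive_bump; congr (_ * (_ * _)).
rewrite (bigD1 i) //= big1 ?addr0; first by rewrite !mxE !eqxx mulr1.
by move=> j ji; rewrite !mxE eqxx (negbTE ji) mulr0.
Qed.

Lemma sqnorm_grad_bump x :
  sqnorm (grad bump x) = (2 * a ^+ 2 * expinv 2 (bump_arg x)) ^+ 2 * sqdist x.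
Proof.
rewrite /sqnorm /sqdist mulr_sumr; apply: eq_bigr => i _.
by rewrite grad_bump; ring.
Qed.

Lemma sqdist_ge0 x : 0 <= sqdist x.
Proof. by apply: sumr_ge0 => i _; exact: sqr_ge0. Qed.

Lemma sqr_dev_le_sqdist x i : (x 0 i - center i) ^+ 2 <= sqdist x.
Proof.
rewrite /sqdist (bigD1 i) //= lerDl.
by apply: sumr_ge0 => j _; exact: sqr_ge0.
Qed.

Lemma bump_le1 x : bump x <= 1.
Proof. exact: expinv0_le1. Qed.

Lemma bump_neq0_in_ball x : bump x != 0 -> a ^+ 2 * sqdist x <= 1.
Proof.
rewrite /bump; case: (ltP 0 (bump_arg x)) => [|s0]; first by rewrite /bump_arg; lra.
by rewrite expinv_le0 // eqxx.
Qed.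

Lemma sqnorm_center x :
  sqnorm x = sqdist x + 2 * (1 + 2 / a) * (x 0 i0 - center i0) + (1 + 2 / a) ^+ 2.
Proof.
rewrite /sqnorm /sqdist.
rewrite (eq_bigr (fun i => (x 0 i - center i) ^+ 2 +
    (2 * (x 0 i - center i) * center i + center i ^+ 2))); last by move=> i _; ring.
rewrite big_split /= -addrA; congr (_ + _).
rewrite (bigD1 i0) //= big1 ?addr0; first by rewrite /center eqxx mul1r; ring.
by move=> j ji; rewrite /center (negbTE ji) mul0r mulr0 expr0n /= addr0.
Qed.

Lemma sqdist_le_in_ball x : 0 < a -> a ^+ 2 * sqdist x <= 1 -> sqdist x <= (1 / a) ^+ 2.
Proof. by move=> a0; rewrite expr_div_n expr1n ler_pdivlMr ?exprn_gt0 // mulrC. Qed.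

Lemma dev_le_in_ball x i : 0 < a -> a ^+ 2 * sqdist x <= 1 ->
  `|x 0 i - center i| <= 1 / a.
Proof.
move=> a0 hq; have hl := sqr_dev_le_sqdist x i.
have b0 : 0 < 1 / a by rewrite divr_gt0.
have hq' := sqdist_le_in_ball x a0 hq.
by rewrite ler_norml; apply/andP; split; nra.
Qed.

Lemma enorm_in_ball x : 0 < a -> a ^+ 2 * sqdist x <= 1 ->
  1 + 1 / a <= enorm x <= 1 + 3 / a.
Proof.
move=> a0 hq; set b := 1 / a.
have b0 : 0 < b by rewrite /b divr_gt0.
have /ler_normlP[lb' lb] := dev_le_in_ball x i0 a0 hq; rewrite -/b in lb lb'.
have hsq := sqdist_ge0 x; have hl := sqr_dev_le_sqdist x i0.
have hq' := sqdist_le_in_ball x a0 hq; rewrite -/b in hq'.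
have ex := sqnorm_center x.
have -> : 3 / a = 3 * b by rewrite /b mulrA mulr1.
rewrite (_ : 2 / a = 2 * b) in ex; last by rewrite /b mulrA mulr1.
set l := x 0 i0 - center i0 in ex lb lb' hl.
rewrite /enorm; apply/andP; split.
- rewrite -[1 + 1 / a]ger0_norm -/b; last by rewrite addr_ge0 // ltW.
  rewrite -sqrtr_sqr; apply: ler_wsqrtr; rewrite ex.
  have : 0 <= (l + b) * (l + 2 + 3 * b) by apply: mulr_ge0; lra.
  nra.
- rewrite -[1 + 3 * b]ger0_norm; last by rewrite addr_ge0 // mulr_ge0 // ltW.
  rewrite -sqrtr_sqr; apply: ler_wsqrtr; rewrite ex.
  have : 0 <= (1 + 2 * b) * (b - l) by apply: mulr_ge0; lra.
  nra.
Qed.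

Definition bump_ball : set 'rV[R]_N := [set x | a ^+ 2 * sqdist x <= 1].

Lemma closed_bump_ball : closed bump_ball.
Proof.
have : continuous (fun x : 'rV[R]_N => a ^+ 2 * sqdist x).
  move=> x; apply: differentiable_continuous; apply: differentiableM.
    exact: differentiable_cst.
  exact: elementary_differentiable elementary_sqdist x.
by move/continuous_closedP => /(_ [set t | t <= 1]); apply; exact: closed_le.
Qed.

Lemma bump_support_ball : closure [set x | bump x != 0] `<=` bump_ball.
Proof.
rewrite [X in _ `<=` X](closure_id _).1; last exact: closed_bump_ball.
by apply: closureS => x; exact: bump_neq0_in_ball.
Qed.

Lemma bump_ball_annulus : 6 <= a -> bump_ball `<=` @annulus R N.
Proof.
move=> ha x hx; have a0 : 0 < a by lra.
have /andP[h1 h2] := enorm_in_ball x a0 hx.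
have : 0 < 1 / a by rewrite divr_gt0.
have : 3 / a <= 1 / 2 by rewrite ler_pdivrMr // mulrC mulrA; lra.
by rewrite /annulus /=; lra.
Qed.

Lemma test_fun_bump : 6 <= a -> test_fun (@annulus R N) bump.
Proof.
move=> ha; have a0 : 0 < a by lra.
split; first exact: elementary_smooth elementary_bump.
split; last exact: subset_trans bump_support_ball (bump_ball_annulus ha).
have cube_compact : compact [set v : 'rV[R]_N | forall i,
    (`[center i - 1 / a, center i + 1 / a]%classic : set R) (v ord0 i)].
  exact: (rV_compact (A := fun i => `[center i - 1 / a, center i + 1 / a]%classic)
    (fun i => @segment_compact R _ _)).
apply: (subclosed_compact _ cube_compact); first exact: closed_closure.
move=> x /bump_support_ball hx i /=.
by rewrite in_itv /= -ler_distl; exact: dev_le_in_ball.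
Qed.

Definition inner_radius : R := 1 / (2 * a * N%:R).

Lemma inner_radius_gt0 : 0 < a -> (0 < N)%N -> 0 < inner_radius.
Proof. by move=> a0 N0; rewrite divr_gt0 // !mulr_gt0 // ltr0n. Qed.

Lemma sqdist_inner_cube x : 0 < a -> (0 < N)%N ->
  (forall i, `|x 0 i - center i| <= inner_radius) -> a ^+ 2 * sqdist x <= 1 / 4.
Proof.
move=> a0 N0 hx; set r := inner_radius in hx *.
have N1 : 1 <= N%:R :> R by rewrite ler1n.
have r0 : 0 < r := inner_radius_gt0 a0 N0.
have hq : sqdist x <= r ^+ 2 *+ N.
  rewrite /sqdist -[N in _ *+ N]card_ord -sumr_const; apply: ler_sum => i _.
  move: (hx i) => /ler_normlP[d1 d2].
  have : 0 <= (r - (x 0 i - center i)) * (r + (x 0 i - center i)).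
    by apply: mulr_ge0; lra.
  nra.
have -> : 1 / 4 = a ^+ 2 * (r ^+ 2 *+ N) * N%:R :> R.
  by rewrite /r /inner_radius -mulr_natr; field; apply/andP; split; rewrite gt_eqF // ltr0n.
rewrite -[X in X <= _]mulr1; apply: ler_pM; rewrite ?mulr_ge0 ?sqr_ge0 ?sqdist_ge0 ?(ltW a0) //.
by rewrite ler_wpM2l ?sqr_ge0.
Qed.

Lemma bump_ge x : 0 < a -> a ^+ 2 * sqdist x <= 1 / 4 -> expR (- (4 / 3)) <= bump x.
Proof.
move=> a0 hq; have s0 : 3 / 4 <= bump_arg x by rewrite /bump_arg; lra.
rewrite /bump expinv_gt0 ?expr0 ?mulr1; last lra.
by rewrite ler_expR lerN2 -div1r ler_pdivrMr; lra.
Qed.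

(* On the ball, ||x| - 2| >= 1 - 3/a >= exp(-6/a), hence Psi a x >= exp(-6). *)
Lemma Psi_ge_in_ball x : 6 <= a -> a ^+ 2 * sqdist x <= 1 -> expR (-6) <= Psi a x.
Proof.
move=> ha hq; have a0 : 0 < a by lra.
have /andP[_ h2] := enorm_in_ball x a0 hq.
set b := 1 / a.
have b0 : 0 < b by rewrite divr_gt0.
have b6 : b <= 1 / 6 by rewrite /b ler_pdivrMr // mulrC mulrA; lra.
rewrite (_ : 3 / a = 3 * b) in h2; last by rewrite /b mulrA mulr1.
have hn : 1 - 3 * b <= `|enorm x - 2| by rewrite ler_normr; apply/orP; right; lra.
have he : expR (- (6 * b)) <= 1 - 3 * b.
  rewrite expRN -div1r ler_pdivrMr ?expR_gt0 //.
  have := expR_ge1Dx (6 * b) => h.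
  have : 0 <= (1 - 3 * b) * (expR (6 * b) - (1 + 6 * b)) by apply: mulr_ge0; lra.
  nra.
have -> : expR (-6) = expR (- (6 * b)) `^ a.
  by rewrite -expRM /b; congr expR; field; rewrite gt_eqF.
rewrite /Psi; apply: ge0_ler_powR; rewrite ?nnegrE ?expR_ge0 ?normr_ge0 ?(ltW a0) //.
exact: le_trans he hn.
Qed.

Lemma sqnorm_grad_bump_le x : 0 < a ->
  sqnorm (grad bump x) <= 4 * 4`!%:R ^+ 2 * a ^+ 2 * cube_indic center (1 / a) x.
Proof.
move=> a0; rewrite sqnorm_grad_bump.
have K0 : 0 <= 4 * 4`!%:R ^+ 2 :> R by apply: mulr_ge0; [exact: ler0n | exact: sqr_ge0].
have [s0|s0] := leP (bump_arg x) 0.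
  rewrite expinv_le0 // mulr0 expr0n /= mul0r.
  exact: mulr_ge0 (mulr_ge0 K0 (sqr_ge0 a)) (cube_indic_ge0 _ _ _ _).
have hq : a ^+ 2 * sqdist x <= 1 by move: s0; rewrite /bump_arg; lra.
rewrite cube_indic1 ?mulr1 => [|i]; last exact: dev_le_in_ball.
have s1 : bump_arg x <= 1.
  by rewrite /bump_arg lerBlDr lerDl mulr_ge0 ?sqr_ge0 ?sqdist_ge0.
have e0 := expinv_ge0 2 (bump_arg x).
have c0 : 0 < 4`!%:R :> R by rewrite ltr0n fact_gt0.
have e_le : expinv 2 (bump_arg x) <= 4`!%:R.
  apply: le_trans (expinv_le_sqr 2 _) _.
  by rewrite -[X in _ <= X]mulr1 ler_wpM2l ?(ltW c0) // expr_le1 ?(ltW s0).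
set e := expinv 2 _ in e0 e_le *.
have -> : (2 * a ^+ 2 * e) ^+ 2 * sqdist x = 4 * e ^+ 2 * a ^+ 2 * (a ^+ 2 * sqdist x).
  by ring.
rewrite -[X in _ <= X]mulr1; apply: ler_pM; rewrite ?mulr_ge0 ?sqr_ge0 ?sqdist_ge0 ?(ltW a0) //.
apply: ler_wpM2r; first exact: sqr_ge0.
by apply: ler_wpM2l; rewrite ?ler0n // ler_sqr ?nnegrE ?(ltW c0).
Qed.

Lemma Psi_bump_le x p : 6 <= a -> 0 < p ->
  Psi a x * `|bump x| `^ p <= cube_indic center (1 / a) x.
Proof.
move=> ha p0; have a0 : 0 < a by lra.
have [->|bx] := eqVneq (bump x) 0.
  by rewrite normr0 powR0 ?gt_eqF // mulr0 cube_indic_ge0.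
have hq := bump_neq0_in_ball x bx.
rewrite cube_indic1 => [|i]; last exact: dev_le_in_ball.
have /andP[h1 h2] := enorm_in_ball x a0 hq.
have b3 : 3 / a <= 1 / 2 by rewrite ler_pdivrMr // mulrC mulrA; lra.
have b1 : 0 < 1 / a by rewrite divr_gt0.
have n1 : `|enorm x - 2| <= 1 by rewrite ler_norml; apply/andP; split; lra.
rewrite -[1 in leRHS](mulr1 1); apply: ler_pM; rewrite ?powR_ge0 //.
- rewrite /Psi; apply: (@le_trans _ _ (1 `^ a)); last by rewrite powR1.
  by apply: ge0_ler_powR; rewrite ?nnegrE ?normr_ge0 ?ler01 ?(ltW a0).
- apply: (@le_trans _ _ (1 `^ p)); last by rewrite powR1.
  apply: ge0_ler_powR; rewrite ?nnegrE ?normr_ge0 ?ler01 ?(ltW p0) //.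
  by rewrite ger0_norm ?expinv_ge0 // bump_le1.
Qed.

Lemma Psi_bump_ge x p : 6 <= a -> (0 < N)%N -> 0 < p ->
  expR (-6) * expR (- (4 / 3)) `^ p * cube_indic center inner_radius x <=
  Psi a x * `|bump x| `^ p.
Proof.
move=> ha N0 p0; have a0 : 0 < a by lra.
have [[xin ->]|->] := cube_indicP _ center inner_radius x; last first.
  by rewrite mulr0 mulr_ge0 ?powR_ge0.
have hq := sqdist_inner_cube x a0 N0 xin.
rewrite mulr1; apply: ler_pM; rewrite ?expR_ge0 ?powR_ge0 //.
  by apply: Psi_ge_in_ball => //; lra.
apply: ge0_ler_powR; rewrite ?nnegrE ?expR_ge0 ?normr_ge0 ?(ltW p0) //.
by rewrite ger0_norm ?expinv_ge0 // bump_ge.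
Qed.

Lemma H1_bump_ge x : 6 <= a -> (0 < N)%N ->
  expR (- (4 / 3)) ^+ 2 * cube_indic center inner_radius x <=
  bump x ^+ 2 + sqnorm (grad bump x).
Proof.
move=> ha N0; have a0 : 0 < a by lra.
have g0 := sqnorm_ge0 (grad bump x).
have [[xin ->]|->] := cube_indicP _ center inner_radius x; last first.
  by rewrite mulr0 addr_ge0 ?sqr_ge0.
rewrite mulr1 ler_wpDr // ler_sqr ?nnegrE ?expR_ge0 ?expinv_ge0 //.
exact: bump_ge x a0 (sqdist_inner_cube x a0 N0 xin).
Qed.

Lemma iint_sqnorm_grad_bump_le : 0 < a ->
  (iint (fun x => (sqnorm (grad bump x))%:E) <=
   (4 * 4`!%:R ^+ 2 * a ^+ 2 * (2 * (1 / a)) ^+ N)%:E)%E.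
Proof.
move=> a0; have K0 : 0 <= 4 * 4`!%:R ^+ 2 * a ^+ 2 :> R.
  by apply: mulr_ge0; [apply: mulr_ge0; [exact: ler0n | exact: sqr_ge0] | exact: sqr_ge0].
rewrite -(iint_cube_indic center K0) ?divr_ge0 ?(ltW a0) //.
by apply: ge0_le_iint => x; rewrite lee_fin ?sqnorm_ge0 ?sqnorm_grad_bump_le.
Qed.

Lemma iint_Psi_bump_le p : 6 <= a -> 0 < p ->
  (iint (fun x => (Psi a x * `|bump x| `^ p)%:E) <= ((2 * (1 / a)) ^+ N)%:E)%E.
Proof.
move=> ha p0; have a0 : 0 < a by lra.
rewrite -[X in (_ <= X%:E)%E]mul1r -(iint_cube_indic center ler01) ?divr_ge0 ?(ltW a0) //.
apply: ge0_le_iint => x; rewrite lee_fin; last by rewrite [X in _ <= X]mul1r; exact: Psi_bump_le.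
by rewrite mulr_ge0 ?powR_ge0.
Qed.

Lemma iint_Psi_bump_ge p : 6 <= a -> (0 < N)%N -> 0 < p ->
  ((expR (-6) * expR (- (4 / 3)) `^ p * (2 * inner_radius) ^+ N)%:E <=
   iint (fun x => (Psi a x * `|bump x| `^ p)%:E))%E.
Proof.
move=> ha N0 p0; have a0 : 0 < a by lra.
have c0 : 0 <= expR (-6) * expR (- (4 / 3)) `^ p :> R.
  by rewrite mulr_ge0 ?expR_ge0 ?powR_ge0.
rewrite -(iint_cube_indic center c0) ?(ltW (inner_radius_gt0 a0 N0)) //.
apply: ge0_le_iint => x; rewrite lee_fin; last exact: Psi_bump_ge.
by rewrite mulr_ge0 ?cube_indic_ge0.
Qed.

Lemma iint_H1_bump_neq0 : 6 <= a -> (0 < N)%N ->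
  iint (fun x => (bump x ^+ 2 + sqnorm (grad bump x))%:E) != 0%E.
Proof.
move=> ha N0; have a0 : 0 < a by lra.
have r0 := inner_radius_gt0 a0 N0.
have c0 : 0 <= expR (- (4 / 3)) ^+ 2 :> R by exact: sqr_ge0.
have lb : ((expR (- (4 / 3)) ^+ 2 * (2 * inner_radius) ^+ N)%:E <=
    iint (fun x => (bump x ^+ 2 + sqnorm (grad bump x))%:E))%E.
  rewrite -(iint_cube_indic center c0) ?(ltW r0) //.
  apply: ge0_le_iint => x; rewrite lee_fin; last exact: H1_bump_ge.
  by rewrite mulr_ge0 ?cube_indic_ge0.
apply: contraTneq lb => ->; rewrite lee_fin -ltNge.
by rewrite mulr_gt0 ?exprn_gt0 ?expR_gt0 // mulr_gt0.
Qed.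

Lemma H10_bump : 6 <= a -> H10 (@annulus R N) bump (grad bump).
Proof.
move=> ha; split; first exact: elementary_borel elementary_bump.
split.
  move=> i; have -> : (fun x => grad bump x 0 i) = fun x => 'D_(delta_mx 0 i) bump x.
    by apply: funext => x; rewrite /grad mxE.
  by apply: elementary_borel; apply: elementary_derive; exact: elementary_bump.
exists (fun _ => bump); split; first by move=> _; exact: test_fun_bump.
split.
  have -> : (fun n : nat => iint (fun x => ((bump x - bump x) ^+ 2)%:E)) = fun _ => 0%E.
    by apply: funext => n; apply: iint0 => x; rewrite subrr expr0n.
  exact: cvg_cst.
have -> : (fun n : nat => iint (fun x => (sqnorm (grad bump x - grad bump x))%:E)) =
    fun _ => 0%E.
  apply: funext => n; apply: iint0 => x.
  by rewrite subrr /sqnorm big1 // => i _; rewrite mxE expr0n.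
exact: cvg_cst.
Qed.

Lemma S_ap_le_bump p : 6 <= a -> (0 < N)%N -> 0 < p ->
  (S_ap N a p <= (4 * 4`!%:R ^+ 2 * a ^+ 2 * (2 * (1 / a)) ^+ N /
    (expR (-6) * expR (- (4 / 3)) `^ p * (2 * inner_radius) ^+ N) `^ (2 / p))%:E)%E.
Proof.
move=> ha N0 p0; have a0 : 0 < a by lra.
have r0 := inner_radius_gt0 a0 N0.
apply: le_trans (_ : Rayleigh a p bump (grad bump) <= _)%E.
  apply: ereal_inf_lbound; exists bump, (grad bump); split => //.
    exact: H10_bump.
  exact: iint_H1_bump_neq0.
apply: Rayleigh_le => //.
- by rewrite !mulr_gt0 ?expR_gt0 ?powR_gt0 ?exprn_gt0 // mulr_gt0.
- exact: iint_sqnorm_grad_bump_le.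
- exact: iint_Psi_bump_ge.
rewrite fin_numE; apply/andP; split.
  by rewrite gt_eqF // (lt_le_trans _ (iint_Psi_bump_ge p ha N0 p0)) ?ltNyr.
by rewrite lt_eqF // (le_lt_trans (iint_Psi_bump_le p ha p0)) ?ltry.
Qed.

End Bump.

Section Scaling.
Context {R : realType} (N : nat) (p : R).

Definition bump_const : R :=
  4 * 4`!%:R ^+ 2 * 2 ^+ N * N%:R `^ (N%:R * (2 / p)) /
  (expR (-6) * expR (- (4 / 3)) `^ p) `^ (2 / p).

Lemma bump_const_gt0 : (0 < N)%N -> 0 < bump_const.
Proof.
move=> N0; apply: divr_gt0; first by rewrite !mulr_gt0 ?exprn_gt0 ?powR_gt0 ?ltr0n ?fact_gt0.
by rewrite powR_gt0 // mulr_gt0 ?expR_gt0 ?powR_gt0.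
Qed.

(* Collects the powers of a: a^2 a^(-N) (a^(-N))^(-2/p) = a^(2 - N + 2N/p). *)
Lemma bump_ratio_scaling (a : R) : (0 < N)%N -> 0 < a -> 0 < p ->
  4 * 4`!%:R ^+ 2 * a ^+ 2 * (2 * (1 / a)) ^+ N /
    (expR (-6) * expR (- (4 / 3)) `^ p * (2 * @inner_radius R N a) ^+ N) `^ (2 / p) =
  bump_const * a `^ (2 - N%:R + 2 * N%:R / p).
Proof.
move=> N0 a0 p0.
have Nr0 : 0 < N%:R :> R by rewrite ltr0n.
set c := expR (-6) * expR (- (4 / 3)) `^ p.
have c0 : 0 < c by rewrite mulr_gt0 ?expR_gt0 ?powR_gt0.
have aN0 : 0 < a * N%:R by rewrite mulr_gt0.
have -> : 2 * @inner_radius R N a = (a * N%:R)^-1.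
  by rewrite /inner_radius; field; rewrite !gt_eqF.
rewrite powRM ?(ltW c0) ?exprn_ge0 ?invr_ge0 ?(ltW aN0) //.
rewrite -(powR_mulrn _ (ltW (_ : 0 < (a * N%:R)^-1))) ?invr_gt0 // -powRrM.
have -> : (a * N%:R)^-1 `^ (N%:R * (2 / p)) =
    (a `^ (N%:R * (2 / p)) * N%:R `^ (N%:R * (2 / p)))^-1.
  by rewrite -powR_inv1 ?(ltW aN0) // -powRrM mulN1r powRN powRM ?(ltW a0) ?(ltW Nr0).
have -> : 2 - N%:R + 2 * N%:R / p = 2%:R + (- N%:R + N%:R * (2 / p)) by ring.
rewrite (@powRD _ a 2%:R); last by apply/implyP => _; rewrite gt_eqF.
rewrite (@powRD _ a (- N%:R)); last by apply/implyP => _; rewrite gt_eqF.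
rewrite powR_mulrn ?powR_invn ?(ltW a0) // /bump_const -/c exprMn expr_div_n expr1n.
have aX_neq0 : a `^ (N%:R * (2 / p)) != 0 by rewrite gt_eqF // powR_gt0.
have NX_neq0 : N%:R `^ (N%:R * (2 / p)) != 0 :> R by rewrite gt_eqF // powR_gt0.
have cX_neq0 : c `^ (2 / p) != 0 by rewrite gt_eqF // powR_gt0.
have aN_neq0 : a ^+ N != 0 by rewrite expf_neq0 // gt_eqF.
by field; apply/and4P.
Qed.

End Scaling.

Theorem lemma2p3 (R : realType) (N : nat) (p : R) :
  (3 <= N)%N ->
  2 < p -> p < 2 * N%:R / (N%:R - 2) ->
  exists abar : R, 0 < abar /\
  exists C : R, 0 < C /\
  forall alpha : R, abar <= alpha ->
    (S_ap N alpha p <= (C * alpha `^ (2 - N%:R + 2 * N%:R / p))%:E)%E.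
Proof.
move=> N3 p2 _; have N0 : (0 < N)%N by apply: leq_trans N3.
have p0 : 0 < p by lra.
exists 6; split => //; exists (bump_const N p); split; first exact: bump_const_gt0.
move=> a ha; have a0 : 0 < a by lra.
rewrite -bump_ratio_scaling //.
exact: (S_ap_le_bump (Ordinal N0)).
Qed.
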